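(* Let $k=\mathbb R$ or $\mathbb C$, let $(E,g)$ be a finite-dimensional inner product vector space over $k$, let $f\in\operatorname{End}_k(E)$, let $H_1,\dots,H_n$ be $f$-invariant subspaces with $E=H_1\oplus\dots\oplus H_n$, and write $f_i=f|_{H_i}$. Let $\widetilde{\mathcal H}_f^\perp=[\operatorname{Ker} f_1]_1^\perp\oplus\dots\oplus[\operatorname{Ker} f_n]_n^\perp$. Then $\widetilde{\mathcal H}_f^\perp=[\operatorname{Ker} f]^\perp$ if and only if $[\operatorname{Ker} f_i]_i^\perp\subseteq\big[\sum_{j\ne i}\operatorname{Ker} f_j\big]^\perp$ for every $i\in\{1,\dots,n\}$.
   Context: An inner product is linear in the first argument, conjugate-symmetric and positive definite. For a subspace $U\subseteq E$, $U^\perp=\{e\in E:g(u,e)=0\ \forall u\in U\}$; for a subspace $W\subseteq H_i$, $[W]_i^\perp=\{v\in H_i:g(w,v)=0\ \forall w\in W\}$. *)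

From HB Require Import structures.
From mathcomp Require Import all_boot all_order all_algebra.
Set Implicit Arguments. Unset Strict Implicit. Unset Printing Implicit Defensive.
Import Order.TTheory GRing.Theory Num.Theory.
Local Open Scope ring_scope.

(* The scalar field K is an arbitrary numFieldType equipped with an involutive
   ring automorphism [conj]: K = R with conj = id, or K = C with
   conj = complex conjugation, are the two cases of the paper. *)

Definition inner_product (K : numFieldType) (E : vectType K)
    (conj : K -> K) (g : E -> E -> K) : Prop :=
  [/\ forall (a : K) (x y z : E), g (a *: x + y) z = a * g x z + g y z,
      forall x y : E, g y x = conj (g x y)
    & forall x : E, x != 0 -> 0 < g x x].

Definition orthv (K : numFieldType) (E : vectType K) (g : E -> E -> K)
    (U : {vspace E}) (e : E) : Prop :=
  forall u, u \in U -> g u e = 0.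

Definition rel_orthv (K : numFieldType) (E : vectType K) (g : E -> E -> K)
    (Hi W : {vspace E}) (v : E) : Prop :=
  v \in Hi /\ orthv g W v.

Definition sum_sets (K : numFieldType) (E : vectType K) (n : nat)
    (P : 'I_n -> E -> Prop) (v : E) : Prop :=
  exists u : 'I_n -> E, (forall i, P i (u i)) /\ v = \sum_(i < n) u i.

From HB Require Import structures.
From mathcomp Require Import all_boot all_order all_algebra.
Import Order.TTheory GRing.Theory Num.Theory.
Local Open Scope ring_scope.

(* Since every H_i is f-invariant and the sum is direct, Ker f splits as the
   direct sum of the K_i = Ker f_i, so a vector is orthogonal to Ker f iff it
   is orthogonal to every K_i.  A sum of vectors u_i in [K_i]_i^perp is thus
   orthogonal to Ker f exactly when each u_i is also orthogonal to the K_j,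
   j <> i.  Conversely, if all such sums lie in [Ker f]^perp, split v in
   [Ker f]^perp along the H_i and project each component orthogonally onto
   K_i: v = a + b with a in Ker f and b a sum of elements of the [K_i]_i^perp;
   then a = v - b lies in Ker f and in [Ker f]^perp, so a = 0. *)

Section InnerProduct.

Context {K : numFieldType} {conj : {rmorphism K -> K}}.
Context {E : vectType K} {g : E -> E -> K}.
Hypothesis hg : inner_product conj g.

Lemma gDl x y z : g (x + y) z = g x z + g y z.
Proof. by case: hg => gL _ _; rewrite -[x in LHS]scale1r gL mul1r. Qed.

Lemma g0l z : g 0 z = 0.
Proof. by apply: (addIr (g 0 z)); rewrite add0r -gDl addr0. Qed.

Lemma gZl a x z : g (a *: x) z = a * g x z.
Proof. by case: hg => gL _ _; rewrite -[_ *: x]addr0 gL g0l addr0. Qed.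

Lemma gBl x y z : g (x - y) z = g x z - g y z.
Proof. by rewrite gDl -scaleN1r gZl mulN1r. Qed.

Lemma gsuml (I : Type) (r : seq I) (P : pred I) (F : I -> E) z :
  g (\sum_(i <- r | P i) F i) z = \sum_(i <- r | P i) g (F i) z.
Proof. by elim/big_rec2: _ => [|i a b _ <-]; rewrite ?g0l ?gDl. Qed.

Lemma gC x y : g y x = conj (g x y).
Proof. by case: hg. Qed.

Lemma gDr x y z : g z (x + y) = g z x + g z y.
Proof. by rewrite gC gDl rmorphD -!gC. Qed.

Lemma g0r z : g z 0 = 0.
Proof. by rewrite gC g0l rmorph0. Qed.

Lemma gBr x y z : g z (x - y) = g z x - g z y.
Proof. by rewrite gC gBl rmorphB -!gC. Qed.

Lemma gsumr (I : Type) (r : seq I) (P : pred I) (F : I -> E) z :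
  g z (\sum_(i <- r | P i) F i) = \sum_(i <- r | P i) g z (F i).
Proof. by elim/big_rec2: _ => [|i a b _ <-]; rewrite ?g0r ?gDr. Qed.

Lemma g_eq0 x : g x x = 0 -> x = 0.
Proof.
by case: hg => _ _ gpos; apply: contra_eq => /gpos; rewrite lt0r => /andP[].
Qed.

Lemma orthv0 (U : {vspace E}) : orthv g U 0.
Proof. by move=> u _; rewrite g0r. Qed.

Lemma orthvB {U : {vspace E}} {x y} :
  orthv g U x -> orthv g U y -> orthv g U (x - y).
Proof. by move=> ox oy u uU; rewrite gBr ox ?oy ?subr0. Qed.

Lemma orthv_sum {U : {vspace E}} {I : Type} {r : seq I} {F : I -> E} :
  (forall i, orthv g U (F i)) -> orthv g U (\sum_(i <- r) F i).
Proof. by move=> oF u uU; rewrite gsumr big1 // => i _; apply: oF. Qed.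

Lemma orthv_subv {U V : {vspace E}} {x} :
  (U <= V)%VS -> orthv g V x -> orthv g U x.
Proof. by move=> /subvP sUV oV u /sUV/oV. Qed.

Lemma orthv_addv (U V : {vspace E}) x :
  orthv g (U + V) x <-> orthv g U x /\ orthv g V x.
Proof.
split=> [oUV | [oU oV] _ /memv_addP[u uU [v vV ->]]].
  by split; apply: orthv_subv oUV; rewrite ?addvSl ?addvSr.
by rewrite gDl oU ?oV ?addr0.
Qed.

Lemma orthv_id {U : {vspace E}} {x} : x \in U -> orthv g U x -> x = 0.
Proof. by move=> xU /(_ x xU)/g_eq0. Qed.

Lemma orthv_vbasis (W : {vspace E}) x :
  (forall j : 'I_(\dim W), g (vbasis W)`_j x = 0) -> orthv g W x.
Proof.
move=> ob w wW; rewrite (coord_vbasis wW) gsuml big1 // => j _.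
by rewrite gZl ob mulr0.
Qed.

(* The coordinates y |-> (g y b_j)_j along a basis b of W are injective on W
   by positivity, hence onto by dimension: some a in W has the same
   coordinates as x. *)
Lemma orthv_proj (W : {vspace E}) x : exists2 a, a \in W & orthv g W (x - a).
Proof.
pose phi y : 'rV[K]_(\dim W) := \row_j g y (vbasis W)`_j.
have phiL : linear phi by move=> c y z; apply/rowP => j; rewrite !mxE gDl gZl.
pose Phi : {linear E -> 'rV[K]_(\dim W)} :=
  HB.pack phi (GRing.isLinear.Build _ _ _ _ phi phiL).
pose L := linfun Phi.
have LE y : L y = phi y by rewrite (lfunE Phi).
have injW : (W :&: lker L = 0)%VS.
  apply/eqP; rewrite -subv0; apply/subvP => y; rewrite memv_cap memv_ker memv0.
  case/andP=> yW /eqP Ly0; apply/eqP/(orthv_id yW); apply: orthv_vbasis => j.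
  have /rowP/(_ j) := Ly0; rewrite LE !mxE => gyb0.
  by rewrite gC gyb0 rmorph0.
have imL : (L @: W)%VS = fullv.
  by apply/eqP; rewrite eqEdim subvf limg_dim_eq // dimvf /dim /= mul1n.
have /memv_imgP[a aW] : phi x \in (L @: W)%VS by rewrite imL memvf.
rewrite LE => /rowP phixa; exists a => //; apply: orthv_vbasis => j.
by rewrite gC gBl; have := phixa j; rewrite !mxE => ->; rewrite subrr rmorph0.
Qed.

Lemma rel_orthv_proj (Hi W : {vspace E}) x : (W <= Hi)%VS -> x \in Hi ->
  exists2 a, a \in W & rel_orthv g Hi W (x - a).
Proof.
move=> /subvP sWH xH; have [a aW oa] := orthv_proj W x.
by exists a => //; split => //; apply: rpredB xH (sWH _ aW).
Qed.

End InnerProduct.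

Lemma sum_sets1 {K : numFieldType} {E : vectType K} {n : nat}
    {P : 'I_n -> E -> Prop} {i : 'I_n} {v : E} :
  (forall j, P j 0) -> P i v -> sum_sets P v.
Proof.
move=> P0 Piv; exists (fun j => if j == i then v else 0); split.
  by move=> j; case: eqP => [->|].
by rewrite (bigD1 i) //= eqxx big1 ?addr0 // => j /negPf->.
Qed.

Lemma lker_cap_sumv (K : fieldType) (E : vectType K) (f : 'End(E)) (n : nat)
    (H : 'I_n -> {vspace E}) :
  (forall i, (f @: H i <= H i)%VS) -> directv (\sum_(i < n) H i)%VS ->
  (lker f :&: \sum_i H i)%VS = (\sum_i (lker f :&: H i))%VS.
Proof.
move=> Hinv /directv_sum_independent Hind; apply/eqP; rewrite eqEsubv.
apply/andP; split; last first.
  by apply/subv_sumP => i _; apply: capvS => //; apply: (sumv_sup i).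
apply/subvP => v; rewrite memv_cap memv_ker.
case/andP=> /eqP fv0 /memv_sumP[vs vsH ev].
have fvs0 i : f (vs i) = 0.
  apply: (Hind (fun i => f (vs i))) => // [j _|]; last first.
    by rewrite -linear_sum -ev.
  exact: subvP (Hinv j) _ (memv_img f (vsH j isT)).
by rewrite ev; apply: memv_sumr => i _; rewrite memv_cap memv_ker fvs0 eqxx vsH.
Qed.

Section KernelOrthogonal.

Context {K : numFieldType} {conj : {rmorphism K -> K}}.
Context {E : vectType K} {g : E -> E -> K} {f : 'End(E)} {n : nat}.
Context {H : 'I_n -> {vspace E}}.
Hypothesis hg : inner_product conj g.
Hypothesis Hinv : forall i, (f @: H i <= H i)%VS.
Hypothesis Hdir : directv (\sum_(i < n) H i)%VS.
Hypothesis Hfull : (\sum_(i < n) H i)%VS = fullv.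

Local Notation Kf i := (lker f :&: H i)%VS.
Local Notation Hperp := (sum_sets (fun i => rel_orthv g (H i) (Kf i))).

Lemma lker_sumv : lker f = (\sum_i Kf i)%VS.
Proof. by rewrite -lker_cap_sumv // Hfull capvf. Qed.

Lemma Hperp_orthv_lker :
    (forall i v, rel_orthv g (H i) (Kf i) v ->
       orthv g (\sum_(j < n | j != i) Kf j)%VS v) ->
  forall v, Hperp v -> orthv g (lker f) v.
Proof.
move=> oKj _ [u [Hu ->]]; apply: (orthv_sum hg) => i.
rewrite lker_sumv (bigD1 i) //=; apply/(orthv_addv hg).
by split; [case: (Hu i) | apply: oKj].
Qed.

Lemma orthv_lker_Hperp :
  (forall v, Hperp v -> orthv g (lker f) v) ->
  forall v, orthv g (lker f) v -> Hperp v.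
Proof.
move=> sHperp v ov; have /memv_sumP[vs vsH ev] : v \in (\sum_i H i)%VS.
  by rewrite Hfull memvf.
have proj i : exists2 a, a \in Kf i & rel_orthv g (H i) (Kf i) (vs i - a).
  by apply: (rel_orthv_proj hg); rewrite ?capvSr ?vsH.
have [a aK ob] := fin_all_exists2 proj.
have bHperp : Hperp (\sum_i (vs i - a i)) by exists (fun i => vs i - a i).
have a0 : \sum_i a i = 0.
  apply: (orthv_id hg (U := lker f)).
    by apply: rpred_sum => i _; apply: subvP (capvSl _ _) _ (aK i).
  have -> : \sum_i a i = v - \sum_i (vs i - a i) by rewrite sumrB ev subKr.
  exact (orthvB hg ov (sHperp _ bHperp)).
by rewrite ev -[\sum_i vs i]subr0 -[X in _ - X]a0 -sumrB.
Qed.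

End KernelOrthogonal.

Theorem lemma3p8 (K : numFieldType) (conj : {rmorphism K -> K})
    (conjK : involutive conj) (E : vectType K) (g : E -> E -> K)
    (hg : inner_product conj g) (f : 'End(E)) (n : nat)
    (H : 'I_n -> {vspace E})
    (Hinv : forall i, (f @: H i <= H i)%VS)
    (Hdir : directv (\sum_(i < n) H i)%VS)
    (Hfull : (\sum_(i < n) H i)%VS = fullv) :
  (forall v : E,
      sum_sets (fun i => rel_orthv g (H i) (lker f :&: H i)%VS) v
      <-> orthv g (lker f) v)
  <->
  (forall (i : 'I_n) (v : E),
      rel_orthv g (H i) (lker f :&: H i)%VS v ->
      orthv g (\sum_(j < n | j != i) (lker f :&: H j))%VS v).
Proof.
split=> [Hperp_eq i v vperp | oKj].
  have /Hperp_eq ov :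
      sum_sets (fun i => rel_orthv g (H i) (lker f :&: H i)%VS) v.
    apply: (sum_sets1 _ vperp) => j.
    by split; [exact: mem0v | exact (orthv0 hg _)].
  apply: orthv_subv ov; apply/subv_sumP => j _; exact: capvSl.
have Hperp_sub := Hperp_orthv_lker hg Hinv Hdir Hfull oKj.
move=> v; split; first exact: Hperp_sub.
exact: orthv_lker_Hperp hg Hfull Hperp_sub v.
Qed.
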